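(* Let $d\ge 2$, let $G\le \mathrm{Aut}(\mathcal{T}_d)$ be a self-similar group, and let $V_d(G)$ be the corresponding Röver--Nekrashevych group. Then for every finite group $F$, the wreath product $F\wr [V_d(G),V_d(G)]$ embeds into the commutator subgroup $[V_d(G),V_d(G)]$.
   Context: $\mathcal{T}_d$ is the rooted $d$-regular tree with vertex set the finite words $\{1,\dots,d\}^*$, root the empty word, and edges $w$ — $wi$. Every $g\in\mathrm{Aut}(\mathcal{T}_d)$ can be written uniquely as $g=\sigma(g_1,\dots,g_d)$ with $\sigma\in S_d$ and $g_i\in\mathrm{Aut}(\mathcal{T}_d)$, meaning $g(iw)=\sigma(i)g_i(w)$ for all words $w$; the $g_i$ are the level-1 states. $G\le\mathrm{Aut}(\mathcal{T}_d)$ is self-similar if all level-1 states of all elements of $G$ lie in $G$. Let $\mathfrak{C}_d=\{1,\dots,d\}^{\mathbb{N}}$ be the Cantor set of infinite words, on which $\mathrm{Aut}(\mathcal{T}_d)$ acts faithfully by homeomorphisms. For a finite word $w$, the cone $\mathfrak{C}_d(w)=\{w\omega:\omega\in\mathfrak{C}_d\}$ and $h_w:\mathfrak{C}_d\to\mathfrak{C}_d(w)$, $\omega\mapsto w\omega$. The Röver--Nekrashevych group $V_d(G)$ is the group of homeomorphisms $f$ of $\mathfrak{C}_d$ for which there exist partitions of $\mathfrak{C}_d$ into cones $\mathfrak{C}_d(w_1),\dots,\mathfrak{C}_d(w_n)$ and $\mathfrak{C}_d(w_1'),\dots,\mathfrak{C}_d(w_n')$ (same $n$) and elements $g_1,\dots,g_n\in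 G$ such that $f$ restricted to $\mathfrak{C}_d(w_i)$ equals $h_{w_i'}\circ g_i\circ h_{w_i}^{-1}$ for each $i$. For groups $F$ (finite) and $H$, $F\wr H$ denotes the wreath product $H^F\rtimes F$, where $F$ acts on the coordinates of $H^F$ by left translation of $F$ on itself. *)

From mathcomp Require Import all_boot all_fingroup.
Set Implicit Arguments. Unset Strict Implicit. Unset Printing Implicit Defensive.

(* Vertices of T_d: finite words over {1..d} (here 'I_d). Edges w -- w i. *)
Definition word (d : nat) := seq 'I_d.

Definition tree_adj d (u v : word d) : Prop :=
  (exists i, v = rcons u i) \/ (exists i, u = rcons v i).

Definition is_tree_aut d (g : word d -> word d) : Prop :=
  bijective g /\ forall u v, tree_adj u v <-> tree_adj (g u) (g v).

(* Level-1 state g_i : g (i w) = sigma(i) g_i(w). *)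
Definition state d (g : word d -> word d) (i : 'I_d) : word d -> word d :=
  fun w => behead (g (i :: w)).

Definition is_aut_subgroup d (G : (word d -> word d) -> Prop) : Prop :=
  [/\ forall g, G g -> is_tree_aut g,
      G id,
      forall g h, G g -> G h -> G (g \o h)
    & forall g, G g -> exists h, [/\ G h, cancel g h & cancel h g]].

Definition self_similar d (G : (word d -> word d) -> Prop) : Prop :=
  is_aut_subgroup G /\ forall g i, G g -> G (state g i).

Definition cantor (d : nat) := nat -> 'I_d.

Definition act d (g : word d -> word d) (om : cantor d) : cantor d :=
  fun n => nth (om n) (g (mkseq om n.+1)) n.

Definition cat_word d (w : word d) (om : cantor d) : cantor d :=
  fun k => if k < size w then nth (om 0) w k else om (k - size w).

Definition in_cone d (w : word d) (om : cantor d) : Prop :=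
  exists om', om = cat_word w om'.

Definition cone_partition d n (ws : 'I_n -> word d) : Prop :=
  forall om : cantor d, exists! i : 'I_n, in_cone (ws i) om.

Definition cantor_continuous d (f : cantor d -> cantor d) : Prop :=
  forall om n, exists m, forall om',
    (forall k, k < m -> om' k = om k) -> forall k, k < n -> f om' k = f om k.

Definition is_homeo d (f : cantor d -> cantor d) : Prop :=
  exists g, [/\ cancel f g, cancel g f, cantor_continuous f & cantor_continuous g].

Definition RN d (G : (word d -> word d) -> Prop) (f : cantor d -> cantor d) : Prop :=
  is_homeo f /\
  exists n (ws ws' : 'I_n -> word d) (gs : 'I_n -> word d -> word d),
    [/\ cone_partition ws, cone_partition ws', forall i, G (gs i)
      & forall i om, f (cat_word (ws i) om) = cat_word (ws' i) (act (gs i) om)].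

Inductive commutator_subgroup T (V : (T -> T) -> Prop) : (T -> T) -> Prop :=
  | cs_one : commutator_subgroup V id
  | cs_comm : forall a b ai bi, V a -> V b ->
      cancel a ai -> cancel ai a -> cancel b bi -> cancel bi b ->
      commutator_subgroup V (ai \o bi \o a \o b)
  | cs_mul : forall x y, commutator_subgroup V x -> commutator_subgroup V y ->
      commutator_subgroup V (x \o y)
  | cs_inv : forall x y, commutator_subgroup V x -> cancel x y -> cancel y x ->
      commutator_subgroup V y.

(* Wreath product F wr H = H^F x| F, F acting on H^F by left translation:
   (phi, f) (psi, f') = (x |-> phi x * psi (f^-1 x), f f'). *)
Definition wr_mul (gT : finGroupType) T (p q : (gT -> T -> T) * gT) :
    (gT -> T -> T) * gT :=
  (fun x => p.1 x \o q.1 ((p.2)^-1 * x)%g, (p.2 * q.2)%g).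

Definition wreath_embeds_into (gT : finGroupType) T (K : (T -> T) -> Prop)
    (emb : (gT -> T -> T) * gT -> (T -> T)) : Prop :=
  [/\ forall p, (forall x, K (p.1 x)) -> K (emb p),
      forall p q, (forall x, K (p.1 x)) -> (forall x, K (q.1 x)) ->
        emb p = emb q -> (forall x, p.1 x = q.1 x) /\ p.2 = q.2
    & forall p q, (forall x, K (p.1 x)) -> (forall x, K (q.1 x)) ->
        emb (wr_mul p q) = emb p \o emb q].

From Pilot Require Import Defs.
From mathcomp Require Import all_boot all_fingroup.
From Stdlib Require Import FunctionalExtensionality ClassicalEpsilon.
Set Implicit Arguments. Unset Strict Implicit. Unset Printing Implicit Defensive.

(* Fix L = |F x F| and encode each z in F x F by a word [code z] of length L,
   using two distinct letters (this is where d >= 2 is needed).  A permutation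
   of F x F then acts on the Cantor set by permuting the cones C(code z), and a
   family (phi x)_(x in F) acts by running phi x inside C(code (x, 1)).  This
   gives an injective homomorphism from F wr V_d(G) into V_d(G).  It maps
   F wr [V, V] into [V, V]: running an element inside a single cone is an
   endomorphism of V_d(G), hence preserves [V, V]; and the top permutation
   (x, y) |-> (f x, y) is the commutator of (x, y) |-> (x, f y) with the shear
   (x, y) |-> (x^-1 y, y), which is why the spare coordinate y is there. *)

Lemma cat_word_nil d (om : cantor d) : cat_word [::] om = om.
Proof. by apply: functional_extensionality => k; rewrite /cat_word subn0. Qed.

Lemma cat_wordA d (u v : word d) om :
  cat_word (u ++ v) om = cat_word u (cat_word v om).
Proof.
apply: functional_extensionality => k; rewrite /cat_word size_cat nth_cat.
case: (ltnP k (size u)) => [ltku | leuk].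
  by rewrite ltn_addr //; apply: set_nth_default.
by rewrite -{1}(subnKC leuk) ltn_add2l subnDA.
Qed.

Section CantorSplit.
Variables d L : nat.

Definition cantor_take (om : cantor d) : L.-tuple 'I_d := [tuple om i | i < L].
Definition cantor_drop (om : cantor d) : cantor d := fun k => om (k + L).

Lemma cantor_take_cat (t : L.-tuple 'I_d) om : cantor_take (cat_word t om) = t.
Proof.
apply: eq_from_tnth => i; rewrite tnth_mktuple /cat_word size_tuple ltn_ord.
by rewrite (tnth_nth (om 0)).
Qed.

Lemma cantor_drop_cat (t : L.-tuple 'I_d) om : cantor_drop (cat_word t om) = om.
Proof.
apply: functional_extensionality => k; rewrite /cantor_drop /cat_word size_tuple.
by rewrite ltnNge leq_addl addnK.
Qed.

Lemma cat_cantor_take_drop om : cat_word (cantor_take om) (cantor_drop om) = om.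
Proof.
apply: functional_extensionality => k; rewrite /cat_word size_tuple.
case: ltnP => [ltkL | leLk]; last by rewrite /cantor_drop subnK.
by rewrite /= (nth_map (Ordinal ltkL)) ?size_enum_ord // nth_enum_ord.
Qed.

Lemma in_cone_cat (t : L.-tuple 'I_d) (v : word d) om :
  in_cone (tval t ++ v) om <-> cantor_take om = t /\ in_cone v (cantor_drop om).
Proof.
split=> [[x ->] | [<- [x om_x]]].
  by rewrite cat_wordA cantor_take_cat cantor_drop_cat; split=> //; exists x.
by exists x; rewrite cat_wordA -om_x cat_cantor_take_drop.
Qed.

End CantorSplit.

Section LevelMap.
Variables d L : nat.
Local Notation T := (L.-tuple 'I_d).

Definition level_map (pi : T -> T) (hs : T -> cantor d -> cantor d) (om : cantor d) :=
  cat_word (pi (cantor_take L om)) (hs (cantor_take L om) (cantor_drop L om)).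

Lemma level_map_cat pi hs (t : T) om :
  level_map pi hs (cat_word t om) = cat_word (pi t) (hs t om).
Proof. by rewrite /level_map cantor_take_cat cantor_drop_cat. Qed.

Lemma level_map_comp pi hs pi' hs' :
  level_map pi hs \o level_map pi' hs' =
  level_map (pi \o pi') (fun t => hs (pi' t) \o hs' t).
Proof. by apply: functional_extensionality => om; rewrite /= level_map_cat. Qed.

Lemma level_map_id : level_map id (fun=> id) = id.
Proof. exact: functional_extensionality (@cat_cantor_take_drop d L). Qed.

Lemma level_map_cancel pi pi' hs hs' :
  cancel pi pi' -> (forall t, cancel (hs t) (hs' (pi t))) ->
  cancel (level_map pi hs) (level_map pi' hs').
Proof.
by move=> piK hsK om; rewrite level_map_cat piK hsK cat_cantor_take_drop.
Qed.

Lemma level_map_continuous pi hs :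
  (forall t, cantor_continuous (hs t)) -> cantor_continuous (level_map pi hs).
Proof.
move=> hs_cont om n; set t := cantor_take L om.
have [m hs_m] := hs_cont t (cantor_drop L om) n.
exists (L + m) => om' om'_om k ltkn.
have take_om' : cantor_take L om' = t.
  by apply: eq_from_tnth => i; rewrite !tnth_mktuple om'_om // ltn_addr.
rewrite /level_map take_om' -/t /cat_word size_tuple; case: ifP => [ltkL | leLk].
  by apply: set_nth_default; rewrite size_tuple.
apply: hs_m (leq_ltn_trans (leq_subr _ _) ltkn) => j ltjm.
by rewrite /cantor_drop om'_om // addnC ltn_add2l.
Qed.

Lemma level_map_homeo pi hs :
  bijective pi -> (forall t, is_homeo (hs t)) -> is_homeo (level_map pi hs).
Proof.
move=> [pi' piK pi'K] hs_homeo.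
have [hs' hs'P] := choice _ hs_homeo.
exists (level_map pi' (fun t => hs' (pi' t))).
have [hsK hs'K hs_cont hs'_cont] := all_and4 hs'P.
split; [ | exact: level_map_cancel | exact: level_map_continuous
        | exact: level_map_continuous].
by apply: level_map_cancel => // t; rewrite piK.
Qed.

End LevelMap.

Section RoverNekrashevych.
Variables (d : nat) (G : (word d -> word d) -> Prop).

Lemma RN_fin_partition (I : finType) (ws ws' : I -> word d)
    (gs : I -> word d -> word d) (f : cantor d -> cantor d) :
  is_homeo f -> (forall om, exists! i, in_cone (ws i) om) ->
  (forall om, exists! i, in_cone (ws' i) om) -> (forall i, G (gs i)) ->
  (forall i om, f (cat_word (ws i) om) = cat_word (ws' i) (Defs.act (gs i) om)) ->
  RN G f.
Proof.
move=> f_homeo ws_part ws'_part Ggs f_ws; split=> //.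
have reindex (w : I -> word d) : (forall om, exists! i, in_cone (w i) om) ->
    cone_partition (fun j : 'I_#|I| => w (enum_val j)).
  move=> w_part om; have [i [om_i i_uniq]] := w_part om.
  exists (enum_rank i); split=> [|j om_j]; first by rewrite enum_rankK.
  by rewrite (i_uniq _ om_j) enum_valK.
exists #|I|, (ws \o enum_val), (ws' \o enum_val), (gs \o enum_val).
by split=> [||j|j]; [apply: reindex | apply: reindex | apply: Ggs | apply: f_ws].
Qed.

Lemma RN_id : G id -> RN G id.
Proof.
move=> Gid; have cone_nil om : exists! i : unit, in_cone [::] om.
  by exists tt; split=> [|[] //]; exists om; rewrite cat_word_nil.
apply: (@RN_fin_partition unit (fun=> [::]) (fun=> [::]) (fun=> id)) => // [|_ om].
  by exists id; split=> // om n; exists n => om' om'_om k; apply: om'_om.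
rewrite !cat_word_nil; apply: functional_extensionality => k.
by rewrite /Defs.act nth_mkseq.
Qed.

Record cone_rep := ConeRep {
  cone_num : nat;
  cone_src : 'I_cone_num -> word d;
  cone_dst : 'I_cone_num -> word d;
  cone_state : 'I_cone_num -> word d -> word d }.
Arguments cone_src : clear implicits.
Arguments cone_dst : clear implicits.
Arguments cone_state : clear implicits.

Definition represents (f : cantor d -> cantor d) (r : cone_rep) :=
  [/\ cone_partition (cone_src r), cone_partition (cone_dst r),
      forall i, G (cone_state r i)
    & forall i om, f (cat_word (cone_src r i) om) =
                   cat_word (cone_dst r i) (Defs.act (cone_state r i) om)].

Lemma RN_represented f : RN G f -> exists r, represents f r.
Proof. by case=> _ [n [ws [ws' [gs [? ? ? ?]]]]]; exists (ConeRep ws ws' gs). Qed.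

Section Refinement.
Variable L : nat.
Local Notation T := (L.-tuple 'I_d).

Lemma tuple_cone_partition (pi : T -> T) (n : T -> nat)
    (ws : forall t, 'I_(n t) -> word d) :
  bijective pi -> (forall t, cone_partition (ws t)) ->
  forall om, exists! s : {t : T & 'I_(n t)},
    in_cone (tval (pi (tag s)) ++ ws _ (tagged s)) om.
Proof.
move=> [pi' piK pi'K] ws_part om; set t := pi' (cantor_take L om).
have [i [om_i i_uniq]] := ws_part t (cantor_drop L om).
exists (Tagged (fun t => 'I_(n t)) i); split=> [|[t' i'] /in_cone_cat [take_om om_i']].
  by apply/in_cone_cat; rewrite /= pi'K.
have eq_t' : t' = t by rewrite /t take_om piK.
by subst t'; rewrite (i_uniq _ om_i').
Qed.

Lemma RN_level_map (pi : T -> T) (hs : T -> cantor d -> cantor d) :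
  bijective pi -> (forall t, RN G (hs t)) -> RN G (level_map pi hs).
Proof.
move=> pi_bij RN_hs.
have [R hs_R] := choice _ (fun t => RN_represented (RN_hs t)).
have [R_src R_dst R_G R_hs] := all_and4 hs_R.
apply: (@RN_fin_partition {t : T & 'I_(cone_num (R t))}
  (fun s => tval (tag s) ++ cone_src (R (tag s)) (tagged s))
  (fun s => tval (pi (tag s)) ++ cone_dst (R (tag s)) (tagged s))
  (fun s => cone_state (R (tag s)) (tagged s))).
- by apply: level_map_homeo => // t; case: (RN_hs t).
- have id_bij : bijective (@id T) by exists id.
  exact: (tuple_cone_partition (n := fun t => cone_num (R t)) id_bij R_src).
- exact: (tuple_cone_partition (n := fun t => cone_num (R t)) pi_bij R_dst).
- by move=> [t i]; apply: R_G.
by move=> [t i] om; rewrite /= !cat_wordA level_map_cat R_hs.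
Qed.

End Refinement.
End RoverNekrashevych.

Lemma commutator_subgroup_hom T U (V : (T -> T) -> Prop) (W : (U -> U) -> Prop)
    (theta : (T -> T) -> U -> U) :
  theta id = id -> {morph theta : a b / a \o b} -> (forall a, V a -> W (theta a)) ->
  forall h, commutator_subgroup V h -> commutator_subgroup W (theta h).
Proof.
move=> theta_id thetaM VW.
have thetaK a b : cancel a b -> cancel (theta a) (theta b).
  move=> ab; have /(congr1 theta) : b \o a = id by apply: functional_extensionality.
  by rewrite thetaM theta_id => /(congr1 (fun f => f _)).
move=> h; elim=> {h} [|a b ai bi Va Vb aK aiK bK biK|x y _ Kx _ Ky|x y _ Kx xK yK].
- by rewrite theta_id; apply: cs_one.
- (* Unrestricted [rewrite !thetaM] loops: [?a \o ?b] unifies with any map. *)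
  rewrite (thetaM (ai \o bi \o a)) (thetaM (ai \o bi)) (thetaM ai).
  by apply: cs_comm; [apply: VW | apply: VW | apply: thetaK ..].
- by rewrite thetaM; apply: cs_mul.
- by apply: cs_inv Kx (thetaK _ _ xK) (thetaK _ _ yK).
Qed.

Section CommutatorLevelMap.
Variables (d L : nat) (G : (word d -> word d) -> Prop).
Hypothesis Gid : G id.
Local Notation T := (L.-tuple 'I_d).
Local Notation K := (commutator_subgroup (RN G)).

Definition at_prefix (t0 : T) (h : cantor d -> cantor d) (t : T) :=
  if t == t0 then h else id.

Lemma commutator_subgroup_at_prefix t0 h : K h -> K (level_map id (at_prefix t0 h)).
Proof.
apply: (commutator_subgroup_hom (theta := fun h => level_map id (at_prefix t0 h))).
- rewrite -[RHS](level_map_id d L); congr level_map.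
  by apply: functional_extensionality => t; rewrite /at_prefix; case: ifP.
- move=> a b; rewrite level_map_comp; congr level_map.
  by apply: functional_extensionality => t; rewrite /at_prefix; case: ifP.
- move=> a RNa; apply: RN_level_map => [|t]; first by exists id.
  by rewrite /at_prefix; case: ifP => // _; apply: RN_id.
Qed.

Lemma commutator_subgroup_level_map (hs : T -> cantor d -> cantor d) :
  (forall t, K (hs t)) -> K (level_map id hs).
Proof.
suff supp_K (s : seq T) (hs' : T -> cantor d -> cantor d) :
    (forall t, K (hs' t)) -> {in [predC s], forall t, hs' t = id} ->
    K (level_map id hs').
  by move=> Khs; apply: (supp_K (enum {: T})) => // t; rewrite !inE mem_enum.
elim: s hs' => [|t0 s IHs] hs' Khs' hs'_supp.
  rewrite (_ : hs' = fun=> id) ?level_map_id; first exact: cs_one.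
  by apply: functional_extensionality => t; apply: hs'_supp.
pose hs'' t := if t == t0 then id else hs' t.
have -> : level_map id hs' = level_map id (at_prefix t0 (hs' t0)) \o level_map id hs''.
  rewrite level_map_comp; congr level_map; apply: functional_extensionality => t.
  by rewrite /at_prefix /hs''; case: eqP => [-> | _].
apply: cs_mul; first exact: commutator_subgroup_at_prefix.
apply: IHs => t; rewrite /hs''.
  by case: eqP => _; [exact: cs_one | exact: Khs'].
rewrite !inE => s_t; case: eqP => // /eqP ne_t0.
by apply: hs'_supp; rewrite !inE negb_or s_t andbT.
Qed.

End CommutatorLevelMap.

Section WreathEmbedding.
Variables (gT : finGroupType) (d' : nat).
Local Notation d := d'.+2.
Local Notation X := (gT * gT)%type.
Local Notation L := #|{: X}|.
Local Notation T := (L.-tuple 'I_d).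

Definition code (z : X) : T :=
  [tuple if i == enum_rank z :> nat then ord_max else ord0 | i < L].

Lemma code_inj : injective code.
Proof.
move=> z z' /(congr1 (fun t : T => tnth t (Ordinal (ltn_ord (enum_rank z))))).
rewrite !tnth_mktuple eqxx.
case: eqP => [/= eq_rank _ | _ /eqP]; first exact/enum_rank_inj/val_inj.
by rewrite -(inj_eq val_inj).
Qed.

Definition decode (t : T) : option X := [pick z | code z == t].

Lemma decode_code z : decode (code z) = Some z.
Proof.
by rewrite /decode; case: pickP => [z' /eqP/code_inj -> // | /(_ z)]; rewrite eqxx.
Qed.

Variant decode_spec (t : T) : option X -> Type :=
  | DecodeCode z of t = code z : decode_spec t (Some z)
  | DecodeNone of decode t = None : decode_spec t None.

Lemma decodeP t : decode_spec t (decode t).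
Proof.
case def_t: (decode t) => [z|]; constructor => //.
by move: def_t; rewrite /decode; case: pickP => // z' /eqP <- [<-].
Qed.

Definition code_map (rho : X -> X) (t : T) : T :=
  if decode t is Some z then code (rho z) else t.

Lemma code_map_code rho z : code_map rho (code z) = code (rho z).
Proof. by rewrite /code_map decode_code. Qed.

Lemma code_map_out rho t : decode t = None -> code_map rho t = t.
Proof. by rewrite /code_map => ->. Qed.

Lemma code_map_comp rho rho' : code_map (rho \o rho') =1 code_map rho \o code_map rho'.
Proof.
move=> t; case: (decodeP t) => [z -> | t_out]; first by rewrite /= !code_map_code.
by rewrite /= !code_map_out.
Qed.

Lemma code_map_cancel rho rho' :
  cancel rho rho' -> cancel (code_map rho) (code_map rho').
Proof.
move=> rhoK t; case: (decodeP t) => [z -> | t_out].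
  by rewrite !code_map_code rhoK.
by rewrite /= !code_map_out.
Qed.

Definition cone_perm (rho : X -> X) := level_map (code_map rho) (fun=> id).

Lemma cone_perm_comp rho rho' :
  cone_perm (rho \o rho') = cone_perm rho \o cone_perm rho'.
Proof.
rewrite /cone_perm level_map_comp; congr level_map.
exact: functional_extensionality (code_map_comp rho rho').
Qed.

Lemma cone_perm_cancel rho rho' :
  cancel rho rho' -> cancel (cone_perm rho) (cone_perm rho').
Proof. by move=> rhoK; apply: level_map_cancel (code_map_cancel rhoK) _. Qed.

Definition lmul1 (f : gT) (z : X) : X := (f * z.1, z.2)%g.
Definition lmul2 (f : gT) (z : X) : X := (z.1, f * z.2)%g.
Definition shear (z : X) : X := (z.1^-1 * z.2, z.2)%g.
Definition shear_inv (z : X) : X := (z.2 * z.1^-1, z.2)%g.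

Lemma lmul1M f g : lmul1 (f * g)%g = lmul1 f \o lmul1 g.
Proof. by apply: functional_extensionality => z; rewrite /lmul1 /= mulgA. Qed.

Lemma lmul2K f : cancel (lmul2 f) (lmul2 f^-1).
Proof. by case=> x y; rewrite /lmul2 /= mulKg. Qed.

Lemma lmul2VK f : cancel (lmul2 f^-1) (lmul2 f).
Proof. by case=> x y; rewrite /lmul2 /= mulKVg. Qed.

Lemma shearK : cancel shear shear_inv.
Proof. by case=> x y; rewrite /shear /shear_inv /= invMg invgK mulKVg. Qed.

Lemma shear_invK : cancel shear_inv shear.
Proof. by case=> x y; rewrite /shear /shear_inv /= invMg invgK mulgKV. Qed.

Lemma lmul1_commutator f : lmul1 f = lmul2 f^-1 \o shear_inv \o lmul2 f \o shear.
Proof.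
apply: functional_extensionality => -[x y].
by rewrite /lmul1 /lmul2 /shear /shear_inv /= invMg invgK mulgA mulgK mulKg.
Qed.

Definition translation (f : gT) := cone_perm (lmul1 f).

Definition base_states (phi : gT -> cantor d -> cantor d) (t : T) :=
  if decode t is Some (x, y) then (if y == 1%g then phi x else id) else id.

Definition base_map phi := level_map id (base_states phi).

Definition wreath_emb (p : (gT -> cantor d -> cantor d) * gT) :=
  base_map p.1 \o translation p.2.

Lemma translation_mul f g : translation (f * g)%g = translation f \o translation g.
Proof. by rewrite /translation lmul1M cone_perm_comp. Qed.

Lemma base_map_comp phi psi :
  base_map phi \o base_map psi = base_map (fun x => phi x \o psi x).
Proof.
rewrite /base_map level_map_comp; congr level_map.
apply: functional_extensionality => t.
by rewrite /base_states; case: (decode t) => [[x y]|] //; case: eqP.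
Qed.

Lemma translation_base_map f psi :
  translation f \o base_map psi = base_map (fun x => psi (f^-1 * x)%g) \o translation f.
Proof.
rewrite /translation /cone_perm /base_map !level_map_comp; congr level_map.
apply: functional_extensionality => t /=.
case: (decodeP t) => [[x y] -> | t_out]; rewrite /base_states.
  by rewrite code_map_code !decode_code /= mulKg.
by rewrite code_map_out ?t_out.
Qed.

Lemma wreath_emb_mul p q : wreath_emb (wr_mul p q) = wreath_emb p \o wreath_emb q.
Proof.
rewrite /wreath_emb /= translation_mul -base_map_comp.
apply: functional_extensionality => om /=.
congr (base_map p.1 _); symmetry.
exact: (congr1 (fun h => h (translation q.2 om)) (translation_base_map p.2 q.1)).
Qed.

Lemma wreath_emb_code p x y om :
  wreath_emb p (cat_word (code (x, y)) om) =
  cat_word (code (p.2 * x, y)%g) (if y == 1%g then p.1 (p.2 * x)%g om else om).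
Proof.
rewrite /wreath_emb /translation /cone_perm /base_map /comp.
rewrite level_map_cat code_map_code level_map_cat /base_states decode_code /=.
by case: eqP.
Qed.

Lemma wreath_emb_inj p q :
  wreath_emb p = wreath_emb q -> (forall x, p.1 x = q.1 x) /\ p.2 = q.2.
Proof.
move=> eq_pq; pose om0 : cantor d := fun=> ord0.
have eq_p2 : p.2 = q.2.
  have := congr1 (fun f => cantor_take L (f (cat_word (code (1, 1)%g) om0))) eq_pq.
  by rewrite !wreath_emb_code !cantor_take_cat !mulg1 => /code_inj [].
split=> // x; apply: functional_extensionality => om.
pose om_x := cat_word (code (p.2^-1 * x, 1)%g) om.
have := congr1 (fun f => cantor_drop L (f om_x)) eq_pq.
by rewrite /= /om_x !wreath_emb_code !cantor_drop_cat eqxx -eq_p2 mulKVg.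
Qed.

Section Commutators.
Variable G : (word d -> word d) -> Prop.
Hypothesis Gid : G id.
Local Notation K := (commutator_subgroup (RN G)).

Lemma RN_cone_perm rho rho' :
  cancel rho rho' -> cancel rho' rho -> RN G (cone_perm rho).
Proof.
move=> rhoK rho'K; apply: RN_level_map => [|_]; last exact: RN_id.
by exists (code_map rho'); apply: code_map_cancel.
Qed.

Lemma commutator_subgroup_translation f : K (translation f).
Proof.
rewrite /translation lmul1_commutator !cone_perm_comp.
apply: cs_comm.
- exact: RN_cone_perm (lmul2K f) (lmul2VK f).
- exact: RN_cone_perm shearK shear_invK.
- exact: cone_perm_cancel (lmul2K f).
- exact: cone_perm_cancel (lmul2VK f).
- exact: cone_perm_cancel shearK.
- exact: cone_perm_cancel shear_invK.
Qed.

Lemma commutator_subgroup_base_map phi : (forall x, K (phi x)) -> K (base_map phi).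
Proof.
move=> Kphi; apply: (commutator_subgroup_level_map Gid) => t.
rewrite /base_states; case: (decode t) => [[x y]|]; last exact: cs_one.
by case: eqP => _; [apply: Kphi | apply: cs_one].
Qed.

Lemma commutator_subgroup_wreath_emb p : (forall x, K (p.1 x)) -> K (wreath_emb p).
Proof.
move=> Kp1; apply: cs_mul (commutator_subgroup_base_map Kp1) _.
exact: commutator_subgroup_translation.
Qed.

End Commutators.
End WreathEmbedding.

Theorem proposition2p5 (d : nat) (G : (word d -> word d) -> Prop)
    (gT : finGroupType) :
  2 <= d -> self_similar G ->
  exists emb : (gT -> cantor d -> cantor d) * gT -> (cantor d -> cantor d),
    wreath_embeds_into (commutator_subgroup (RN G)) emb.
Proof.
case: d G => [|[|d']] G // _ [[_ Gid _ _] _].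
exists (@wreath_emb gT d'); split=> [p | p q _ _ | p q _ _].
- exact: commutator_subgroup_wreath_emb.
- exact: wreath_emb_inj.
- exact: wreath_emb_mul.
Qed.
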